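(* For $t>0$ let $\tilde f_t(z)=\exp(-t/(z+1))$, $z\in\mathbb{C}_+$. Then \[\|\tilde f_t\|_{\mathcal{B}}=\begin{cases}2-e^{-t},&t\in(0,1],\\ 2-e^{-1}+e^{-1}\log t,&t>1.\end{cases}\]
   Context: $\mathbb{C}_+=\{\Re z>0\}$. For holomorphic $f$ on $\mathbb{C}_+$, $\|f\|_{\mathcal{B}}=\sup_{z\in\mathbb{C}_+}|f(z)|+\int_0^\infty\sup_{y\in\mathbb{R}}|f'(x+iy)|\,dx$. *)

From Stdlib Require Import Reals.
From Coquelicot Require Coquelicot.
From mathcomp Require Import all_boot all_order all_algebra.
From mathcomp Require Import all_classical all_reals all_analysis.
From mathcomp Require Import Rstruct Rstruct_topology.

Set Implicit Arguments.
Unset Strict Implicit.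
Unset Printing Implicit Defensive.

Notation C := Coquelicot.Complex.C.

Definition Cexp (z : C) : C :=
  (Rtrigo_def.exp (fst z) * Rtrigo_def.cos (snd z),
   Rtrigo_def.exp (fst z) * Rtrigo_def.sin (snd z))%R.

Definition is_cderiv (f : C -> C) (z l : C) : Prop :=
  @Coquelicot.Derive.is_derive Coquelicot.Complex.C_AbsRing
    Coquelicot.Complex.C_NormedModule f z l.

Local Open Scope classical_set_scope.
Local Open Scope ereal_scope.

Definition sup_half_plane (f : C -> C) : \bar R :=
  ereal_sup [set (Coquelicot.Complex.Cmod (f z))%:E | z in [set z : C | (0 < fst z)%R]].

Definition sup_deriv_line (f : C -> C) (x : R) : \bar R :=
  ereal_sup [set (Coquelicot.Complex.Cmod l)%:E | l in
               [set l : C | exists y : R, is_cderiv f (x, y) l]].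

Definition Bnorm (f : C -> C) : \bar R :=
  sup_half_plane f +
  \int[@lebesgue_measure R]_(x in `]0%R, +oo[) sup_deriv_line f x.

Definition ftilde (t : R) (z : C) : C :=
  Cexp (Coquelicot.Complex.Copp
          (Coquelicot.Complex.Cdiv (Coquelicot.Complex.RtoC t)
             (Coquelicot.Complex.Cplus z (Coquelicot.Complex.RtoC 1%R)))).

(* Put w = z + 1 and u = t Re (1 / w) = t (x + 1) / |w|^2 for z = x + i y.  Then
   |f_t(z)| = e^(-u) and |f_t'(z)| = (t / |w|^2) e^(-u) = u e^(-u) / (x + 1).  On the line
   Re z = x the quantity u sweeps (0, t / (x + 1)], so sup |f_t| = 1 (let x -> oo with
   y = 0) and, since u e^(-u) increases up to its maximum e^(-1) at u = 1,
   sup_y |f_t'(x + i y)| = m e^(-m) / (x + 1) with m = min (t / (x + 1), 1).  This is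
   e^(-1) / (x + 1) for x + 1 <= t and t / (x + 1)^2 e^(-t / (x + 1)) beyond, with
   antiderivatives e^(-1) log (x + 1) and e^(-t / (x + 1)) respectively; integrating over
   (0, oo) gives 1 - e^(-t) for t <= 1 and e^(-1) log t + 1 - e^(-1) for t > 1. *)

From Stdlib Require Import Reals.
From mathcomp Require Import all_boot all_order all_algebra.
From mathcomp Require Import all_classical all_reals all_analysis.
From mathcomp Require Import Rstruct Rstruct_topology measurable_realfun.
From Coquelicot Require Coquelicot.
From Stdlib Require Import Lra.

Module Ftilde.
Import Stdlib.Reals.Reals Coquelicot.Coquelicot.
Local Open Scope R_scope.

Lemma sin_sub_id_le b : Rabs b <= 1 -> Rabs (sin b - b) <= b ^ 2.
Proof.
wlog b_ge0 : b / 0 <= b.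
  move=> Hwlog Hb; have [b_ge0|b_lt0] := Rle_lt_dec 0 b; first exact: Hwlog.
  have := Hwlog (- b) ltac:(lra) ltac:(by rewrite Rabs_Ropp).
  have -> : sin (- b) - - b = - (sin b - b) by rewrite sin_neg; ring.
  by rewrite Rabs_Ropp (_ : (- b) ^ 2 = b ^ 2); last ring.
move=> Hb; rewrite Rabs_right in Hb; last lra.
have [lo _] := pre_sin_bound b 0 b_ge0 ltac:(lra).
rewrite (_ : sin_approx b (2 * 0 + 1) = b - b ^ 3 / 6) in lo; last first.
  by rewrite /sin_approx /sin_term /=; field.
have sin_le_id : sin b <= b.
  by have [/sin_lt_x|<-] := Rle_lt_or_eq_dec _ _ b_ge0; [lra | rewrite sin_0; lra].
apply: Rabs_le; split; nra.
Qed.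

Lemma cos_sub1_le b : Rabs b <= 1 -> Rabs (cos b - 1) <= b ^ 2.
Proof.
move=> /Rabs_le_between Hb.
have [lo _] := pre_cos_bound b 0 ltac:(lra) ltac:(lra).
rewrite (_ : cos_approx b (2 * 0 + 1) = 1 - b ^ 2 / 2) in lo; last first.
  by rewrite /cos_approx /cos_term /=; field.
have [_ cos_le1] := COS_bound b.
apply: Rabs_le; split; nra.
Qed.

Lemma exp_sub1_sub_id_le a : a <= 1/2 -> 0 <= exp a - 1 - a <= 2 * a ^ 2.
Proof.
move=> Ha; have := exp_ineq1_le a; have := exp_ineq1_le (- a).
have Hinv : exp a * exp (- a) = 1 by rewrite -exp_plus Rplus_opp_r exp_0.
have := exp_pos a.
(* [e^a (1 - a) <= e^a e^(-a) = 1] and [1 <= (1 + a + 2 a^2) (1 - a)] for [a <= 1/2] *)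
split; nra.
Qed.

Lemma continuity_pt_Rmin_r f c x :
  continuity_pt f x -> continuity_pt (fun y => Rmin (f y) c) x.
Proof.
move=> fx; apply: (continuity_pt_ext (fun y => (f y + c - Rabs (f y - c)) / 2)).
  by move=> y; rewrite /Rmin; case: Rle_dec => ?; [rewrite Rabs_left1|rewrite Rabs_right]; lra.
apply: continuity_pt_mult; last exact: continuity_pt_const.
apply: continuity_pt_minus; first exact: continuity_pt_plus fx (continuity_pt_const _ _ _).
exact: continuity_pt_comp (continuity_pt_minus _ _ _ fx (continuity_pt_const _ _ _)) (Rcontinuity_abs _).
Qed.

Lemma Cmod_le_Rabs_Re_Im (z : C) : Cmod z <= Rabs (Re z) + Rabs (Im z).
Proof.
case: z => a b; rewrite /Cmod /Re /Im; cbn [fst snd].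
have [a_ge0 b_ge0] := (Rabs_pos a, Rabs_pos b).
rewrite -(sqrt_pow2 (Rabs a + Rabs b)); last lra.
apply: sqrt_le_1_alt; rewrite -(pow2_abs a) -(pow2_abs b); nra.
Qed.

(* [Cexp] is defined with MathComp's multiplication on [R]. *)
Lemma CexpE (z : C) : Cexp z = (exp (Re z) * cos (Im z), exp (Re z) * sin (Im z)).
Proof. by []. Qed.

Lemma Cexp_add (z h : C) : Cexp (z + h) = (Cexp z * Cexp h)%C.
Proof.
case: z h => [a b] [c d]; rewrite !CexpE /Re /Im /= exp_plus cos_plus sin_plus.
by apply: injective_projections; rewrite /=; ring.
Qed.

Lemma Cmod_Cexp (z : C) : Cmod (Cexp z) = exp (Re z).
Proof.
rewrite CexpE /Cmod; cbn [fst snd].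
rewrite !Rpow_mult_distr -Rmult_plus_distr_l Rplus_comm -!Rsqr_pow2 sin2_cos2 Rmult_1_r.
by rewrite sqrt_Rsqr; last exact/Rlt_le/exp_pos.
Qed.

Lemma Cexp_sub1_sub_id_le (h : C) :
  Cmod h <= 1/2 -> Cmod (Cexp h - 1 - h)%C <= 5 * Cmod h ^ 2.
Proof.
move=> Hh; apply: Rle_trans (Cmod_le_Rabs_Re_Im _) _.
have := Rmax_Cmod h; rewrite Cmod2_alt /Rmax.
case: h Hh => a b Hh; rewrite CexpE; cbn [Re Im fst snd Cminus Cplus Copp RtoC].
move=> Hmax; have [Ha Hb] : Rabs a <= 1/2 /\ Rabs b <= 1/2.
  by move: Hmax; case: Rle_dec; lra.
have /Rabs_le_between a_bnd := Ha.
have [A_ge0 A_le] := exp_sub1_sub_id_le a ltac:(lra).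
have Cb := cos_sub1_le b ltac:(lra).
have Sb := sin_sub_id_le b ltac:(lra).
have [a_ge0 b_ge0] := (Rabs_pos a, Rabs_pos b).
rewrite -(pow2_abs a) -(pow2_abs b) in A_le Cb Sb *.
have ea_pos := exp_pos a.
have ea_le2 : exp a <= 2 by nra.
have ea_sub1 : Rabs (exp a - 1) <= 2 * Rabs a.
  rewrite (_ : exp a - 1 = a + (exp a - 1 - a)); last ring.
  apply: Rle_trans (Rabs_triang _ _) _; rewrite (Rabs_right (exp a - 1 - a)); nra.
have sinb : Rabs (sin b) <= 3/2 * Rabs b.
  rewrite (_ : sin b = b + (sin b - b)); last ring.
  apply: Rle_trans (Rabs_triang _ _) _; nra.
rewrite (_ : _ + - a = (exp a - 1 - a) + exp a * (cos b - 1)); last ring.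
rewrite (_ : _ + - b = (exp a - 1) * sin b + (sin b - b)); last ring.
have Re_le : Rabs (exp a - 1 - a + exp a * (cos b - 1)) <= 2 * Rabs a ^ 2 + 2 * Rabs b ^ 2.
  apply: Rle_trans (Rabs_triang _ _) _.
  rewrite Rabs_mult (Rabs_right (exp a)) ?(Rabs_right (exp a - 1 - a)); try lra.
  have := Rabs_pos (cos b - 1); nra.
have Im_le : Rabs ((exp a - 1) * sin b + (sin b - b)) <= 3/2 * Rabs a ^ 2 + 5/2 * Rabs b ^ 2.
  apply: Rle_trans (Rabs_triang _ _) _; rewrite Rabs_mult.
  have := Rmult_le_compat _ _ _ _ (Rabs_pos _) (Rabs_pos _) ea_sub1 sinb.
  have := Rle_0_sqr (Rabs a - Rabs b); rewrite /Rsqr; nra.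
nra.
Qed.

(* Coquelicot carries two normed-module structures on [C]: [is_cderiv] uses
   [C_NormedModule], while the chain rule [is_derive_comp] wants the inner
   function differentiated in [AbsRing_NormedModule C_AbsRing]. *)
Notation is_derive_C := (@is_derive C_AbsRing (AbsRing_NormedModule C_AbsRing)).

Lemma is_cderivE f z l : is_derive_C f z l -> is_cderiv f z l.
Proof.
case=> _ small_o; split; first exact: is_linear_scal_l.
by move=> x Hx eps; exact: small_o x Hx eps.
Qed.

Lemma is_derive_C_quadratic_error (f : C -> C) (z l : C) (d K : R) : 0 < d ->
  (forall h, Cmod h < d -> Cmod (f (z + h) - f z - h * l)%C <= K * Cmod h ^ 2) ->
  is_derive_C f z l.
Proof.
move=> d_gt0 err; split; first exact: is_linear_scal_l.
move=> x /is_filter_lim_locally_unique <- eps.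
have K1_gt0 : 0 < Rabs K + 1 by have := Rabs_pos K; lra.
have r_gt0 : 0 < Rmin d (eps / (Rabs K + 1)).
  by apply: Rmin_pos => //; apply: Rdiv_lt_0_compat => //; exact: cond_pos.
exists (mkposreal _ r_gt0) => y /= Hy.
change (Cmod (f y - f z - (y - z) * l)%C <= eps * Cmod (y - z)%C).
change (Cmod (y - z)%C < Rmin d (eps / (Rabs K + 1))) in Hy.
have {Hy} [Hd Heps] := (Rlt_le_trans _ _ _ Hy (Rmin_l _ _), Rlt_le_trans _ _ _ Hy (Rmin_r _ _)).
have := err _ Hd; rewrite (_ : z + (y - z) = y)%C; last ring.
move=> /Rle_trans; apply.
have m_ge0 := Cmod_ge_0 (y - z)%C.
have : Cmod (y - z)%C * (Rabs K + 1) <= eps.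
  have := Rmult_lt_compat_r _ _ _ K1_gt0 Heps.
  by rewrite /Rdiv Rmult_assoc Rinv_l ?Rmult_1_r; lra.
have := Rle_abs K; nra.
Qed.

Lemma is_cderiv_Cexp (z : C) : is_cderiv Cexp z (Cexp z).
Proof.
apply/is_cderivE/(is_derive_C_quadratic_error _ _ _ (1/2) (5 * Cmod (Cexp z))).
  lra.
move=> h /Rlt_le Hh.
rewrite Cexp_add (_ : _ - _ - _ = Cexp z * (Cexp h - 1 - h))%C; last ring.
rewrite Cmod_mult (Rmult_comm 5) Rmult_assoc.
exact: Rmult_le_compat_l (Cmod_ge_0 _) (Cexp_sub1_sub_id_le _ Hh).
Qed.

Lemma is_derive_C_div_shift (c a z : C) : (z + a)%C <> 0%C ->
  is_derive_C (fun z => c / (z + a))%C z (- c / ((z + a) * (z + a)))%C.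
Proof.
move=> w_neq0; have w_gt0 : 0 < Cmod (z + a) by apply/Cmod_gt_0.
apply: (is_derive_C_quadratic_error _ _ _ (Cmod (z + a) / 2) (2 * Cmod c / Cmod (z + a) ^ 3)).
  lra.
move=> h Hh; set w := (z + a)%C in w_neq0 w_gt0 Hh *.
have wh_gt : Cmod w / 2 <= Cmod (w + h)%C.
  have := Cmod_triangle (w + h)%C (- h)%C; rewrite Cmod_opp (_ : w + h + - h = w)%C; last ring.
  lra.
have wh_neq0 : (w + h)%C <> 0%C by apply/Cmod_gt_0; lra.
rewrite (_ : z + h + a = w + h)%C; last by rewrite /w; ring.
rewrite (_ : _ - _ - _ = c * (h * h) / (w * w * (w + h)))%C; last by field.
rewrite Cmod_div; last by apply: Cmult_neq_0 => //; apply: Cmult_neq_0.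
rewrite !Cmod_mult /Rdiv (_ : Cmod h * Cmod h = Cmod h ^ 2); last ring.
rewrite Rmult_assoc [Cmod h ^ 2 * _]Rmult_comm -Rmult_assoc.
apply: Rmult_le_compat_r; first exact: pow2_ge_0.
rewrite [2 * Cmod c]Rmult_comm [Cmod c * 2 * _]Rmult_assoc.
apply: Rmult_le_compat_l; first exact: Cmod_ge_0.
rewrite (_ : 2 * / Cmod w ^ 3 = / (Cmod w * Cmod w * (Cmod w / 2))); last by field; lra.
by apply: Rinv_le_contravar; [apply: Rmult_lt_0_compat | apply: Rmult_le_compat_l]; nra.
Qed.

Definition mobius (t : R) (z : C) : C := (- (t / (z + 1)))%C.

Lemma ftildeE t : ftilde t = fun z => Cexp (mobius t z).
Proof. by []. Qed.

Lemma is_derive_mobius t z :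
  (z + 1)%C <> 0%C -> is_derive_C (mobius t) z (t / ((z + 1) * (z + 1)))%C.
Proof.
move=> w_neq0; have := is_derive_C_div_shift (- t) 1 z w_neq0.
rewrite (_ : (- - t / _ = t / ((z + 1) * (z + 1)))%C); last by field.
by move=> D; apply: is_derive_ext D => x /=; rewrite /mobius /Cdiv; ring.
Qed.

Lemma is_cderiv_ftilde t z : (z + 1)%C <> 0%C ->
  is_cderiv (ftilde t) z (t / ((z + 1) * (z + 1)) * ftilde t z)%C.
Proof.
move=> /(is_derive_mobius t) Dm; rewrite ftildeE.
exact: is_derive_comp _ _ _ _ _ (is_cderiv_Cexp _) Dm.
Qed.

(* [t Re (1 / (z + 1))] at [z = x + i y] *)
Definition re_mobius (t x y : R) : R := t * (x + 1) / ((x + 1) ^ 2 + y ^ 2).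

Lemma re_mobius_bounds t x y : 0 < t -> 0 < x + 1 ->
  0 < re_mobius t x y <= t / (x + 1).
Proof.
move=> t_gt0 x1_gt0; rewrite /re_mobius; split.
  by apply: Rdiv_lt_0_compat; nra.
apply/Rle_div_l; first nra.
rewrite (_ : t / (x + 1) * _ = t * (x + 1) + t * y ^ 2 / (x + 1)); last by field; lra.
have : 0 <= t * y ^ 2 / (x + 1) by apply: Rdiv_le_0_compat; nra.
lra.
Qed.

Definition xexpNx (u : R) : R := u * exp (- u).

Lemma shift_neq0 x y : 0 < x + 1 -> ((x, y) + 1)%C <> 0%C.
Proof. by move=> x1_gt0 /(f_equal fst) /=; lra. Qed.

Lemma Cmod2_shift x y : Cmod ((x, y) + 1)%C ^ 2 = (x + 1) ^ 2 + y ^ 2.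
Proof. by rewrite Cmod2_alt /Re /Im /= Rplus_0_r. Qed.

Lemma Cmod_ftilde t x y :
  0 < x + 1 -> Cmod (ftilde t (x, y)) = exp (- re_mobius t x y).
Proof.
move=> x1_gt0; rewrite ftildeE Cmod_Cexp /re_mobius; congr exp.
rewrite /mobius /Cdiv /Re /=; field; nra.
Qed.

Lemma Cmod_ftilde_le1 t x y : 0 < t -> 0 < x + 1 -> Cmod (ftilde t (x, y)) <= 1.
Proof.
move=> t_gt0 x1_gt0; rewrite Cmod_ftilde // -exp_0.
by apply/Rlt_le/exp_increasing; have := re_mobius_bounds t x y t_gt0 x1_gt0; lra.
Qed.

Lemma exp_mobius_near1 t e x : 0 < t -> 0 < e -> t / e < x ->
  Rabs (exp (- (t / (x + 1))) - 1) < e.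
Proof.
move=> t_gt0 e_gt0 x_gt; have x1_gt0 : x + 1 > 0 by have := Rdiv_lt_0_compat t e t_gt0 e_gt0; lra.
have u_gt0 : 0 < t / (x + 1) by apply: Rdiv_lt_0_compat; lra.
have u_lt : t / (x + 1) < e.
  apply/(Rlt_div_l _ _ _ x1_gt0).
  have : e * (t / e) = t by field; lra.
  have := Rmult_lt_compat_l e _ _ e_gt0 x_gt; lra.
have : exp (- (t / (x + 1))) < exp 0 by apply: exp_increasing; lra.
rewrite exp_0; have := exp_ineq1_le (- (t / (x + 1))).
by move=> ? ?; apply: Rabs_def1; lra.
Qed.

Lemma Cmod_ftilde_near1 t e : 0 < t -> 0 < e ->
  exists x, 0 < x /\ 1 - e <= Cmod (ftilde t (x, 0)).
Proof.
move=> t_gt0 e_gt0; have x_gt0 : 0 < t / e + 1 by have := Rdiv_lt_0_compat t e t_gt0 e_gt0; lra.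
exists (t / e + 1); split => //; rewrite Cmod_ftilde; last lra.
have -> : re_mobius t (t / e + 1) 0 = t / (t / e + 1 + 1) by rewrite /re_mobius; field; lra.
by have /Rabs_def2 := exp_mobius_near1 t e (t / e + 1) t_gt0 e_gt0 ltac:(lra); lra.
Qed.

Lemma Cmod_ftilde_deriv t x y l : 0 < t -> 0 < x + 1 ->
  is_cderiv (ftilde t) (x, y) l -> Cmod l = xexpNx (re_mobius t x y) / (x + 1).
Proof.
move=> t_gt0 x1_gt0 /is_C_derive_unique.
have w_neq0 := shift_neq0 x y x1_gt0; have /Cmod_gt_0 w_gt0 := w_neq0.
rewrite (is_C_derive_unique _ _ _ (is_cderiv_ftilde t _ w_neq0)) => <-.
rewrite Cmod_mult Cmod_div; last exact: Cmult_neq_0.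
rewrite Cmod_mult Cmod_R Rabs_right ?Cmod_ftilde //; last lra.
by rewrite /xexpNx /re_mobius -Cmod2_shift; field; lra.
Qed.

Lemma ex_ftilde_deriv t x y : 0 < x + 1 -> exists l, is_cderiv (ftilde t) (x, y) l.
Proof. by move=> /(shift_neq0 x y) /(is_cderiv_ftilde t); eexists; eassumption. Qed.

Lemma xexpNx_le_exp_m1 u : xexpNx u <= exp (-1).
Proof.
have -> : exp (-1) = exp (u - 1) * exp (- u) by rewrite -exp_plus; congr exp; ring.
apply: Rmult_le_compat_r; first exact/Rlt_le/exp_pos.
by have := exp_ineq1_le (u - 1); lra.
Qed.

Lemma xexpNx_le_mono u v : 0 <= u <= v -> v <= 1 -> xexpNx u <= xexpNx v.
Proof.
move=> uv v_le1; rewrite /xexpNx.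
have -> : exp (- v) = exp (u - v) * exp (- u) by rewrite -exp_plus; congr exp; ring.
rewrite -Rmult_assoc; apply: Rmult_le_compat_r; first exact/Rlt_le/exp_pos.
by have := exp_ineq1_le (u - v); nra.
Qed.

Lemma xexpNx_le_min u s : 0 <= u <= s -> xexpNx u <= xexpNx (Rmin s 1).
Proof.
move=> us; rewrite /Rmin; case: Rle_dec => s1; first exact: xexpNx_le_mono.
by rewrite (_ : xexpNx 1 = exp (-1)) ?/xexpNx ?Rmult_1_l //; apply: xexpNx_le_exp_m1.
Qed.

(* [sup_y |ftilde_t'(x + i y)|]: [re_mobius t x y] ranges over [(0, t / (x + 1)]]
   and [u e^(-u)] increases up to its maximum at [u = 1]. *)
Definition deriv_line_sup (t x : R) : R := xexpNx (Rmin (t / (x + 1)) 1) / (x + 1).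

Lemma re_mobius_sqrt t x m : 0 < t -> 0 < x + 1 -> 0 < m <= t / (x + 1) ->
  re_mobius t x (sqrt (t * (x + 1) / m - (x + 1) ^ 2)) = m.
Proof.
move=> t_gt0 x1_gt0 [m_gt0 m_le]; rewrite /re_mobius pow2_sqrt.
  by rewrite Rplus_minus; field; lra.
have : (x + 1) ^ 2 * m <= t * (x + 1).
  have := Rmult_le_compat_l ((x + 1) ^ 2) _ _ (pow2_ge_0 _) m_le.
  by rewrite (_ : _ * (t / _) = t * (x + 1)) //; field; lra.
rewrite (_ : _ - _ = (t * (x + 1) - (x + 1) ^ 2 * m) / m); last by field; lra.
by move=> ?; apply: Rdiv_le_0_compat; lra.
Qed.

Lemma Cmod_ftilde_deriv_le t x y l : 0 < t -> 0 < x + 1 ->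
  is_cderiv (ftilde t) (x, y) l -> Cmod l <= deriv_line_sup t x.
Proof.
move=> t_gt0 x1_gt0 /(Cmod_ftilde_deriv _ _ _ _ t_gt0 x1_gt0) ->.
apply: Rmult_le_compat_r; first exact/Rlt_le/Rinv_0_lt_compat.
by apply: xexpNx_le_min; have := re_mobius_bounds t x y t_gt0 x1_gt0; lra.
Qed.

Lemma deriv_line_sup_attained t x : 0 < t -> 0 < x + 1 ->
  exists y l, is_cderiv (ftilde t) (x, y) l /\ Cmod l = deriv_line_sup t x.
Proof.
move=> t_gt0 x1_gt0; set m := Rmin (t / (x + 1)) 1.
have m_bnd : 0 < m <= t / (x + 1).
  split; last exact: Rmin_l.
  by apply: Rmin_glb_lt; [apply: Rdiv_lt_0_compat|]; lra.
exists (sqrt (t * (x + 1) / m - (x + 1) ^ 2)).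
have [l Dl] := ex_ftilde_deriv t x (sqrt (t * (x + 1) / m - (x + 1) ^ 2)) x1_gt0.
exists l; split => //.
by rewrite (Cmod_ftilde_deriv _ _ _ _ t_gt0 x1_gt0 Dl) re_mobius_sqrt.
Qed.

Lemma deriv_line_sup_ge0 t x : 0 < t -> 0 < x + 1 -> 0 <= deriv_line_sup t x.
Proof.
move=> t_gt0 x1_gt0; have [y [l [_ <-]]] := deriv_line_sup_attained t x t_gt0 x1_gt0.
exact: Cmod_ge_0.
Qed.

Lemma deriv_line_sup_far t x :
  0 < x + 1 -> t <= x + 1 -> deriv_line_sup t x = xexpNx (t / (x + 1)) / (x + 1).
Proof.
move=> x1_gt0 tx; rewrite /deriv_line_sup Rmin_left //.
by apply/(Rle_div_l _ _ _ x1_gt0); lra.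
Qed.

Lemma deriv_line_sup_near t x :
  0 < x + 1 -> x + 1 <= t -> deriv_line_sup t x = exp (-1) / (x + 1).
Proof.
move=> x1_gt0 xt; rewrite /deriv_line_sup Rmin_right /xexpNx ?Rmult_1_l //.
by apply/(Rle_div_r _ _ _ x1_gt0); lra.
Qed.

Lemma deriv_line_sup_continuous t x : -1 < x -> continuity_pt (deriv_line_sup t) x.
Proof.
move=> x_gt; rewrite /deriv_line_sup.
apply: continuity_pt_div; last lra.
- apply: continuity_pt_comp; first apply: continuity_pt_Rmin_r.
    by apply/derivable_continuous_pt/ex_derive_Reals_0; auto_derive; lra.
  by apply/derivable_continuous_pt/ex_derive_Reals_0; rewrite /xexpNx; auto_derive.
- by apply/derivable_continuous_pt/ex_derive_Reals_0; auto_derive.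
Qed.

Lemma derivable_pt_lim_exp_mobius t x : 0 < x + 1 -> t <= x + 1 ->
  derivable_pt_lim (fun x => exp (- (t / (x + 1)))) x (deriv_line_sup t x).
Proof.
move=> x1_gt0 tx; rewrite deriv_line_sup_far // /xexpNx.
apply/is_derive_Reals; auto_derive; first lra.
by rewrite /Rdiv; field; lra.
Qed.

Lemma derivable_pt_lim_ln_shift t x : 0 < x + 1 -> x + 1 <= t ->
  derivable_pt_lim (fun x => exp (-1) * ln (x + 1)) x (deriv_line_sup t x).
Proof.
move=> x1_gt0 xt; rewrite deriv_line_sup_near //.
by apply/is_derive_Reals; auto_derive; [lra | field; lra].
Qed.

End Ftilde.

Import Order.TTheory GRing.Theory Num.Theory.
Import numFieldNormedType.Exports.
Local Open Scope ring_scope.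
Local Open Scope classical_set_scope.

Lemma derivable_pt_lim_is_derive (f : R -> R) (x l : R) :
  derivable_pt_lim f x l -> is_derive (x : R^o) 1 (f : R^o -> R^o) l.
Proof.
move=> fxl.
have fxlE : (fun h : R => h^-1 *: ((f : R^o -> R^o) (h *: (1 : R^o) + x) - f x)) @ (0 : R)^' --> l.
  apply/cvgrPdist_lt => e /RltP e_gt0; have [d fxld] := fxl e e_gt0.
  apply/nbhs_ballP; exists (pos d); first exact/RltP/cond_pos.
  move=> h /=; rewrite /ball /= sub0r normrN => /RltP; rewrite -RabsE => hd /eqP h_neq0.
  have /RltP := fxld h h_neq0 hd; rewrite RabsE distrC.
  by rewrite RdivE RminusE /GRing.scale /= mulr1 (addrC h x) mulrC.
by split; [apply/cvg_ex; exists l | exact: cvg_lim].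
Qed.

Lemma continuity_pt_within (f : R -> R) (D : set R) :
  (forall x, D x -> continuity_pt f x) -> {within D, continuous f}.
Proof.
by move=> fD; apply: continuous_in_subspaceT => x /set_mem Dx; exact/continuity_pt_cvg/fD.
Qed.

Lemma measurable_continuity_pt (f : R -> R) (D : set (Real.sort R)) : measurable D ->
  (forall x, D x -> continuity_pt f x) -> measurable_fun D (fun x => (f x)%:E).
Proof.
move=> mD fD; apply/measurable_EFinP.
by apply: subspace_continuous_measurable_fun => //; exact: continuity_pt_within.
Qed.

Local Open Scope ereal_scope.

Lemma integral_oc_derivable_pt_lim (f F : R -> R) (a b : R) : (a < b)%coqR ->
  (forall x, (a <= x <= b)%coqR -> continuity_pt f x) ->
  (forall x, (a <= x <= b)%coqR -> derivable_pt_lim F x (f x)) ->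
  \int[lebesgue_measure]_(x in `]a, b]) (f x)%:E = (F b - F a)%:E.
Proof.
move=> /RltP ab fc F'f.
have cf : {within `[a, b], continuous f}.
  by apply: continuity_pt_within => x /=; rewrite in_itv => /andP[/RleP ? /RleP ?]; exact: fc.
have DF x : (a <= x <= b)%coqR -> is_derive (x : R^o) 1%R (F : R^o -> R^o) (f x).
  by move=> /F'f /derivable_pt_lim_is_derive.
have cF x : (a <= x <= b)%coqR -> {for x, continuous F}.
  by move=> /F'f Fx; apply/continuity_pt_cvg/derivable_continuous_pt; exists (f x).
rewrite integral_itv_obnd_cbnd; last first.
  apply/measurable_EFinP.
  apply: (measurable_funS _ _ (subspace_continuous_measurable_fun _ cf)) => //.
  by apply: subset_itvr; rewrite bnd_simp.
rewrite EFinB (@continuous_FTC2 _ _ F _ _ ab cf) //.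
  split; first by move=> x /[!in_itv] /andP[/RltP ? /RltP ?]; have [] := DF x ltac:(lra).
    by apply/cvg_at_right_filter/cF; move/RltP: ab; lra.
  by apply/cvg_at_left_filter/cF; move/RltP: ab; lra.
move=> x /[!in_itv] /andP[/RltP ? /RltP ?]; rewrite derive1E.
by have [] := DF x ltac:(lra).
Qed.

Lemma integral_oy_derivable_pt_lim (f F : R -> R) (a l : R) :
  (forall x, (a <= x)%coqR -> (0 <= f x)%coqR) ->
  (forall x, (a <= x)%coqR -> continuity_pt f x) ->
  (forall x, (a <= x)%coqR -> derivable_pt_lim F x (f x)) ->
  F x @[x --> +oo%R] --> l ->
  \int[lebesgue_measure]_(x in `]a, +oo[) (f x)%:E = (l - F a)%:E.
Proof.
move=> f_ge0 fc F'f Fl.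
have cf : {within `[a, +oo[, continuous f}.
  by apply: continuity_pt_within => x /=; rewrite in_itv andbT => /RleP; exact: fc.
have DF x : (a <= x)%coqR -> is_derive (x : R^o) 1%R (F : R^o -> R^o) (f x).
  by move=> /F'f /derivable_pt_lim_is_derive.
rewrite integral_itv_obnd_cbnd; last first.
  apply/measurable_EFinP.
  apply: (measurable_funS _ _ (subspace_continuous_measurable_fun _ cf)) => //.
  by apply: subset_itvr; rewrite bnd_simp.
rewrite EFinB (@ge0_continuous_FTC2y _ _ F _ _ _ cf Fl) //.
- by move=> x /RleP /f_ge0 /RleP.
- by move=> x /RltP ax; have [] := DF x ltac:(lra).
- apply/cvg_at_right_filter/continuity_pt_cvg/derivable_continuous_pt.
  by exists (f a); apply: F'f; lra.
- by move=> x /[!in_itv] /andP[/RltP ax _]; rewrite derive1E; have [] := DF x ltac:(lra).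
Qed.

Lemma ge0_integral_oy_split (f : R -> R) (a b : R) : (a <= b)%R ->
  measurable_fun (`]a, +oo[ : set (Real.sort R)) (fun x => (f x)%:E) ->
  (forall x, (a < x)%R -> (0 <= f x)%R) ->
  \int[lebesgue_measure]_(x in `]a, +oo[) (f x)%:E =
  \int[lebesgue_measure]_(x in `]a, b]) (f x)%:E +
  \int[lebesgue_measure]_(x in `]b, +oo[) (f x)%:E.
Proof.
move=> ab mf f_ge0.
have split_itv := @itv_bndbnd_setU _ _ _ (BRight b) (BInfty _ false).
rewrite split_itv ?bnd_simp // ge0_integral_setU //; first last.
- apply/disj_setPS => x [] /=; rewrite !in_itv /= andbT => /andP[_ x_le] x_gt.
  by have := lt_le_trans x_gt x_le; rewrite ltxx.
- by rewrite -split_itv ?bnd_simp // => x /=; rewrite in_itv /= andbT lee_fin => /f_ge0.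
- by rewrite -split_itv ?bnd_simp.
Qed.

Lemma exp_mobius_cvg t : (0 < t)%coqR ->
  Rtrigo_def.exp (- (t / (x + 1)))%coqR @[x --> +oo%R] --> (1 : R).
Proof.
move=> t_gt0; apply/(@cvgrPdist_lt _ R^o) => e /RltP e_gt0.
exists (t / e)%coqR; split; first by rewrite num_real.
move=> x /RltP x_gt; rewrite distrC -RminusE -RabsE; apply/RltP.
exact: Ftilde.exp_mobius_near1.
Qed.

Lemma sup_half_plane_ftilde t : (0 < t)%coqR -> sup_half_plane (ftilde t) = 1%:E.
Proof.
move=> t_gt0; apply/eqP; rewrite eq_le; apply/andP; split.
  apply/ereal_supP => _ [[x y] /= /RltP x_gt0 <-]; rewrite lee_fin; apply/RleP.
  by apply: Ftilde.Cmod_ftilde_le1; rewrite -R0E in x_gt0; lra.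
apply/lee_subgt0Pr => e /RltP e_gt0.
have [x [x_gt0 near1]] := Ftilde.Cmod_ftilde_near1 t e t_gt0 e_gt0.
apply: (@le_trans _ _ (Coquelicot.Complex.Cmod (ftilde t (x, 0%coqR)))%:E).
  by rewrite -EFinB lee_fin; apply/RleP.
by apply: ereal_sup_ubound; exists (x, 0%coqR) => //; apply/RltP.
Qed.

Lemma sup_deriv_line_ftilde t x : (0 < t)%coqR -> (0 < x + 1)%coqR ->
  sup_deriv_line (ftilde t) x = (Ftilde.deriv_line_sup t x)%:E.
Proof.
move=> t_gt0 x1_gt0; apply/eqP; rewrite eq_le; apply/andP; split.
  apply/ereal_supP => _ [l [y Dl] <-]; rewrite lee_fin; apply/RleP.
  exact: Ftilde.Cmod_ftilde_deriv_le Dl.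
have [y [l [Dl <-]]] := Ftilde.deriv_line_sup_attained t x t_gt0 x1_gt0.
by apply: ereal_sup_ubound; exists l => //; exists y.
Qed.

Lemma integral_deriv_line_sup_le1 t : (0 < t <= 1)%coqR ->
  \int[lebesgue_measure]_(x in `]0%R, +oo[) (Ftilde.deriv_line_sup t x)%:E =
  (1 - Rtrigo_def.exp (- t))%coqR%:E.
Proof.
move=> t_bnd.
rewrite (@integral_oy_derivable_pt_lim _ (fun x => Rtrigo_def.exp (- (t / (x + 1))))%coqR 0%coqR 1%coqR).
- by rewrite Rplus_0_l Rdiv_1_r.
- by move=> x x_ge0; apply: Ftilde.deriv_line_sup_ge0; lra.
- by move=> x x_ge0; apply: Ftilde.deriv_line_sup_continuous; lra.
- by move=> x x_ge0; apply: Ftilde.derivable_pt_lim_exp_mobius; lra.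
- by apply: exp_mobius_cvg; lra.
Qed.

Lemma integral_deriv_line_sup_gt1 t : (1 < t)%coqR ->
  \int[lebesgue_measure]_(x in `]0%R, +oo[) (Ftilde.deriv_line_sup t x)%:E =
  (Rtrigo_def.exp (-1) * Rpower.ln t + (1 - Rtrigo_def.exp (-1)))%coqR%:E.
Proof.
move=> t_gt1.
have x_gt1 x : (0 < x)%R -> (-1 < x)%coqR by move=> /RltP; rewrite -R0E; lra.
rewrite (@ge0_integral_oy_split _ _ (t - 1)%coqR); first last.
- by move=> x /x_gt1 ?; apply/RleP/Ftilde.deriv_line_sup_ge0; lra.
- apply: measurable_continuity_pt => // x /=; rewrite in_itv /= andbT => /x_gt1.
  exact: Ftilde.deriv_line_sup_continuous.
- by apply/RleP; rewrite -R0E; lra.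
rewrite (@integral_oc_derivable_pt_lim _ (fun x => exp (-1) * Rpower.ln (x + 1))%coqR
  0%coqR (t - 1)%coqR); first last.
- by move=> x x_bnd; apply: Ftilde.derivable_pt_lim_ln_shift; lra.
- by move=> x x_bnd; apply: Ftilde.deriv_line_sup_continuous; lra.
- lra.
rewrite (@integral_oy_derivable_pt_lim _ (fun x => exp (- (t / (x + 1))))%coqR
  (t - 1)%coqR 1%coqR); first last.
- by apply: exp_mobius_cvg; lra.
- by move=> x x_ge; apply: Ftilde.derivable_pt_lim_exp_mobius; lra.
- by move=> x x_ge; apply: Ftilde.deriv_line_sup_continuous; lra.
- by move=> x x_ge; apply: Ftilde.deriv_line_sup_ge0; lra.
rewrite -EFinD; congr EFin.
rewrite (_ : t - 1 + 1 = t)%coqR ?Rplus_0_l ?ln_1 ?Rdiv_diag; try lra.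
rewrite -!RminusE -RplusE (_ : (- (1) = -1)%coqR) ?Rmult_0_r ?Rminus_0_r //; ring.
Qed.

Lemma integral_sup_deriv_line_ftilde t : (0 < t)%coqR ->
  \int[lebesgue_measure]_(x in `]0%R, +oo[) sup_deriv_line (ftilde t) x =
  \int[lebesgue_measure]_(x in `]0%R, +oo[) (Ftilde.deriv_line_sup t x)%:E.
Proof.
move=> t_gt0; apply: eq_integral => x /[!inE] /=; rewrite in_itv /= andbT => /RltP.
by rewrite -R0E => x_gt0; apply: sup_deriv_line_ftilde; lra.
Qed.

Theorem lemma3p4 (t : R) (ht : (0 < t)%R) :
  Bnorm (ftilde t) =
  (if Rle_dec t 1 then (2 - Rtrigo_def.exp (- t))%R
   else (2 - Rtrigo_def.exp (-1) + Rtrigo_def.exp (-1) * Rpower.ln t)%R)%:E.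
Proof.
have t_gt0 : (0 < t)%coqR by move/RltP: ht; rewrite -R0E.
rewrite /Bnorm sup_half_plane_ftilde // integral_sup_deriv_line_ftilde //.
case: Rle_dec => t_le1 /=.
  rewrite integral_deriv_line_sup_le1; last lra.
  by rewrite -EFinD RminusE R1E addrA.
rewrite integral_deriv_line_sup_gt1; last lra.
by rewrite -EFinD RplusE RminusE RmultE R1E addrCA addrC addrA.
Qed.
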